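(* Let $\Theta$ be a space of input histories satisfying the free-choice condition, and let $(\Theta'_k)_{k\in\max\mathrm{Ext}(\Theta)}$ be a family of spaces of input histories with $E^\Theta\cap E^{\Theta'_k}=\emptyset$ for all $k$. Assume that the families of input sets $(I^{\Theta'_k}_\omega)_{\omega\in E^{\Theta'_k}}$ are identical for all $k\in\max\mathrm{Ext}(\Theta)$ and that every $\Theta'_k$ satisfies the free-choice condition. Then $$\mathrm{CC}\big(\Theta\rightsquigarrow(\Theta'_k)_k\big)=\big\{\hat\Theta\rightsquigarrow(\hat\Theta'_k)_k:\ \hat\Theta\in\mathrm{CC}(\Theta),\ \hat\Theta'_k\in\mathrm{CC}(\Theta'_k)\text{ for all }k\in\max\mathrm{Ext}(\Theta)\big\}$$ (where the family $(\hat\Theta'_k)_k$ is indexed by $\max\mathrm{Ext}(\Theta)=\max\mathrm{Ext}(\hat\Theta)$).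
   Context: A partial function is a function $f$ with domain $\mathrm{dom}(f)$ a subset of an index set, values in given sets; ordered by restriction ($f\le g$ iff $\mathrm{dom}(f)\subseteq\mathrm{dom}(g)$, $g|_{\mathrm{dom}(f)}=f$). Compatible = agreeing on common domain; a compatible set $\mathcal F$ has join $\bigvee\mathcal F$ (union). $\Theta$ is $\vee$-prime if for compatible $\mathcal F\subseteq\Theta$ with $\bigvee\mathcal F\in\Theta$ we have $\bigvee\mathcal F\in\mathcal F$. A space of input histories is a finite $\vee$-prime set of partial functions; $E^\Theta=\bigcup_{h\in\Theta}\mathrm{dom}(h)$, $I^\Theta_\omega=\{h(\omega):h\in\Theta,\omega\in\mathrm{dom}(h)\}$, $\mathrm{Ext}(\Theta)=\{\bigvee\mathcal F:\emptyset\ne\mathcal F\subseteq\Theta\text{ compatible}\}$. Free-choice: maximal elements of $\mathrm{Ext}(\Theta)$ are exactly the total functions in $\prod_{\omega\in E^\Theta}I^\Theta_\omega$. $\mathrm{tips}_\Theta(h)=\mathrm{dom}(h)\setminus\bigcup\{\mathrm{dom}(k):k\in\mathrm{Ext}(\Theta),k<h\}$. Causally complete: free-choice and $|\mathrm{tips}_\Theta(h)|=1$ for all $h\in\Theta$. Order: $\Theta_1\le\Theta_2$ iff $\mathrm{Ext}(\Theta_1)\supseteq\mathrm{Ext}(\Theta_2)$. $\mathrm{CC}(\Theta)$ = maximal elements of $\{\Theta_1\le\Theta:\Theta_1\text{ causally complete}\}$. Conditional sequential composition: $\Theta\rightsquigarrow(\Theta'_k)_k=\Theta\cup\{k\vee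 h':k\in\max\mathrm{Ext}(\Theta),\ h'\in\Theta'_k\}$. *)

From Stdlib Require Import List.

Section PartialFunctions.
Variables (E V : Type).

Definition pfun := E -> option V.

Definition dom (h : pfun) (w : E) : Prop := h w <> None.

Definition pfle (f g : pfun) : Prop :=
  forall w v, f w = Some v -> g w = Some v.

Definition pflt (f g : pfun) : Prop := pfle f g /\ f <> g.

Definition fam := pfun -> Prop.

Definition compatible (F : fam) : Prop :=
  forall f g, F f -> F g -> forall w v u, f w = Some v -> g w = Some u -> v = u.

Definition is_join (F : fam) (h : pfun) : Prop :=
  forall w v, h w = Some v <-> exists f, F f /\ f w = Some v.

Definition vee_prime (Th : fam) : Prop :=
  forall (F : fam) h, (forall f, F f -> Th f) -> compatible F ->
    is_join F h -> Th h -> F h.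

Definition finite_fam (Th : fam) : Prop :=
  exists l : list pfun, forall h, Th h <-> In h l.

Definition space (Th : fam) : Prop := finite_fam Th /\ vee_prime Th.

Definition events (Th : fam) (w : E) : Prop := exists h, Th h /\ dom h w.

Definition inputs (Th : fam) (w : E) (v : V) : Prop :=
  exists h, Th h /\ h w = Some v.

Definition Ext (Th : fam) (k : pfun) : Prop :=
  exists F : fam, (exists f, F f) /\ (forall f, F f -> Th f) /\ compatible F /\ is_join F k.

Definition maxExt (Th : fam) (k : pfun) : Prop :=
  Ext Th k /\ forall k', Ext Th k' -> pfle k k' -> k' = k.

Definition total_in_prod (Th : fam) (k : pfun) : Prop :=
  forall w, (events Th w -> exists v, k w = Some v /\ inputs Th w v) /\
            (~ events Th w -> k w = None).

Definition free_choice (Th : fam) : Prop :=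
  forall k, maxExt Th k <-> total_in_prod Th k.

Definition tips (Th : fam) (h : pfun) (w : E) : Prop :=
  dom h w /\ ~ (exists k, Ext Th k /\ pflt k h /\ dom k w).

Definition causally_complete (Th : fam) : Prop :=
  free_choice Th /\
  forall h, Th h -> exists w, tips Th h w /\ forall w', tips Th h w' -> w' = w.

Definition space_le (Th1 Th2 : fam) : Prop :=
  forall k, Ext Th2 k -> Ext Th1 k.

Definition CC_cand (Th Th1 : fam) : Prop :=
  space Th1 /\ causally_complete Th1 /\ space_le Th1 Th.

Definition CC (Th : fam) (Th1 : fam) : Prop :=
  CC_cand Th Th1 /\ forall Th2, CC_cand Th Th2 -> space_le Th1 Th2 -> Th2 = Th1.

Definition join2 (k h' h : pfun) : Prop :=
  is_join (fun f => f = k \/ f = h') h /\ compatible (fun f => f = k \/ f = h').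

Definition seqc (Th : fam) (Th' : pfun -> fam) : fam :=
  fun h => Th h \/
    exists k h', maxExt Th k /\ Th' k h' /\ join2 k h' h.

End PartialFunctions.

Arguments dom {E V}. Arguments pfle {E V}. Arguments pflt {E V}.
Arguments compatible {E V}. Arguments is_join {E V}. Arguments vee_prime {E V}.
Arguments finite_fam {E V}. Arguments space {E V}. Arguments events {E V}.
Arguments inputs {E V}. Arguments Ext {E V}. Arguments maxExt {E V}.
Arguments total_in_prod {E V}. Arguments free_choice {E V}. Arguments tips {E V}.
Arguments causally_complete {E V}. Arguments space_le {E V}. Arguments CC_cand {E V}.
Arguments CC {E V}. Arguments join2 {E V}. Arguments seqc {E V}.

(* If Σ is a causally complete refinement of Θ ⇝ (Θ'_k)_k, the elements of Σ valued in the
   input sets of Θ form a causally complete Θ̂ ≤ Θ, and for each maximal k the ∨-irreducible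
   elements among the x with k ∨ x ∈ Ext(Σ) form a causally complete Θ̂'_k ≤ Θ'_k, with
   Σ ≤ Θ̂ ⇝ (Θ̂'_k)_k.  Conversely, every composition of causally complete refinements of
   Θ and of the Θ'_k is a causally complete refinement of Θ ⇝ (Θ'_k)_k.  Since E^Θ and
   E^Θ'_k are disjoint, k ∨ x determines k and x, so two such compositions compare exactly
   when their components do; maximality therefore transfers in both directions. *)

From Stdlib Require Import List Classical ClassicalEpsilon.
From Stdlib Require Import FunctionalExtensionality PropExtensionality.

Lemma list_minimal {A} (R : A -> A -> Prop) (P : A -> Prop) :
  (forall x, ~ R x x) -> (forall x y z, R x y -> R y z -> R x z) ->
  forall l, (exists x, In x l /\ P x) ->
  exists x, In x l /\ P x /\ forall y, In y l -> P y -> ~ R y x.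
Proof.
  intros Hirr Htr l. induction l as [|a l IH]; intros [x [Hin Px]].
  - destruct Hin.
  - destruct (classic (exists x, In x l /\ P x)) as [Hex|Hnex].
    + destruct (IH Hex) as [m [Hm [Pm Hmin]]].
      destruct (classic (P a /\ R a m)) as [[Pa Ram]|Hno].
      * exists a; split; [left; auto|split; auto].
        intros y [<-|Hy] Py Rya; [apply (Hirr a); auto|].
        apply (Hmin y Hy Py). eapply Htr; eauto.
      * exists m; split; [right; auto|split; auto].
        intros y [<-|Hy] Py Rym; [apply Hno; auto|].
        apply (Hmin y Hy Py Rym).
    + exists a. destruct Hin as [<-|Hin]; [|exfalso; apply Hnex; eauto].
      split; [left; auto|split; auto].
      intros y [<-|Hy] Py Ry; [apply (Hirr a); auto|apply Hnex; eauto].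
Qed.

Fixpoint sublists {A} (l : list A) : list (list A) :=
  match l with nil => nil :: nil | a :: l' => map (cons a) (sublists l') ++ sublists l' end.

Lemma sublists_filter {A} (l : list A) (P : A -> Prop) :
  exists s, In s (sublists l) /\ forall a, In a s <-> In a l /\ P a.
Proof.
  induction l as [|a l IH].
  - exists nil; split; [left; auto|]. intro b; simpl; tauto.
  - destruct IH as [s [Hs Hf]]. simpl.
    destruct (classic (P a)) as [Pa|nPa].
    + exists (a :: s); split.
      * apply in_or_app; left; apply in_map; auto.
      * intro b; simpl; rewrite Hf; split.
        -- intros [<-|H]; tauto.
        -- intros [[<-|H] Pb]; auto.
    + exists s; split.
      * apply in_or_app; right; auto.
      * intro b; rewrite Hf; simpl; split; [tauto|].
        intros [[<-|H] Pb]; tauto.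
Qed.

(** * Extensions, tips and free choice *)

Section PartialFunctions.
Context {E V : Type}.
Implicit Types (f g h k s t x y : pfun E V) (T S U L : fam E V).

Definition valued_in T x : Prop := forall w v, x w = Some v -> inputs T w v.

Definition nonempty x : Prop := exists w v, x w = Some v.

Definition covered T x : Prop :=
  (exists s, T s /\ pfle s x) /\
  forall w v, x w = Some v -> exists s, T s /\ pfle s x /\ s w = Some v.

(* Left-biased union; it is the join of [k] and [x] when their domains are disjoint. *)
Definition pjoin k x : pfun E V :=
  fun w => match k w with Some v => Some v | None => x w end.

Definition restrict (P : E -> Prop) t : pfun E V :=
  fun w => if excluded_middle_informative (P w) then t w else None.

Definition unique_tips T : Prop :=
  forall h, T h -> exists w, tips T h w /\ forall w', tips T h w' -> w' = w.

Lemma pfle_refl f : pfle f f.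
Proof. intros w v H; exact H. Qed.

Lemma pfle_trans f g h : pfle f g -> pfle g h -> pfle f h.
Proof. intros H1 H2 w v H; apply H2, H1, H. Qed.

Lemma pfle_antisym f g : pfle f g -> pfle g f -> f = g.
Proof.
  intros H1 H2; apply functional_extensionality; intro w.
  destruct (f w) eqn:Ef.
  - symmetry; apply H1; exact Ef.
  - destruct (g w) eqn:Eg; [|reflexivity].
    rewrite (H2 _ _ Eg) in Ef; discriminate.
Qed.

Lemma pflt_irrefl f : ~ pflt f f.
Proof. intros [_ H]; apply H; reflexivity. Qed.

Lemma pflt_trans f g h : pflt f g -> pflt g h -> pflt f h.
Proof.
  intros [H1 N1] [H2 N2]; split.
  - eapply pfle_trans; eauto.
  - intro Heq; subst h. apply N1. apply pfle_antisym; auto.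
Qed.

Lemma fam_ext T1 T2 : (forall h, T1 h <-> T2 h) -> T1 = T2.
Proof.
  intro H; apply functional_extensionality; intro h; apply propositional_extensionality; apply H.
Qed.

Lemma pjoin_l k x : pfle k (pjoin k x).
Proof. intros w v H; unfold pjoin; rewrite H; auto. Qed.

Lemma pjoin_r k x w : k w = None -> pjoin k x w = x w.
Proof. intro H; unfold pjoin; rewrite H; auto. Qed.

Lemma pjoin_mono_r k x y : pfle y x -> pfle (pjoin k y) (pjoin k x).
Proof. intros H w v; unfold pjoin; destruct (k w); auto. Qed.

Lemma join2_pjoin k x h :
  (forall w v u, k w = Some v -> x w = Some u -> False) -> (join2 k x h <-> h = pjoin k x).
Proof.
  intro Hd. split.
  - intros [Hj _]. apply functional_extensionality; intro w. unfold pjoin.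
    destruct (k w) eqn:Ek.
    + apply Hj. exists k; auto.
    + destruct (x w) eqn:Ex.
      * apply Hj. exists x; auto.
      * destruct (h w) eqn:Eh; auto.
        apply Hj in Eh. destruct Eh as [f [[->| ->] Hf]]; congruence.
  - intros ->. split.
    + intros w v; unfold pjoin; split.
      * destruct (k w) eqn:Ek; intro H; [exists k| exists x]; split; auto; congruence.
      * intros [f [[->| ->] Hf]]; [rewrite Hf; auto|].
        destruct (k w) eqn:Ek; auto. exfalso; eapply Hd; eauto.
    + intros f g [->| ->] [->| ->] w v u H1 H2; try congruence; exfalso; eapply Hd; eauto.
Qed.

Lemma restrict_in (P : E -> Prop) t w : P w -> restrict P t w = t w.
Proof. intro H; unfold restrict; destruct (excluded_middle_informative (P w)); tauto. Qed.

Lemma restrict_out (P : E -> Prop) t w : ~ P w -> restrict P t w = None.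
Proof. intro H; unfold restrict; destruct (excluded_middle_informative (P w)); tauto. Qed.

Lemma events_inputs T w : events T w <-> exists v, inputs T w v.
Proof.
  split.
  - intros [h [Th Hd]]. unfold dom in Hd. destruct (h w) eqn:Eh; [|congruence].
    exists v, h; auto.
  - intros [v [h [Th Hh]]]. exists h; split; auto. unfold dom; congruence.
Qed.

Lemma inputs_events T w v : inputs T w v -> events T w.
Proof. intro H; apply events_inputs; eauto. Qed.

Lemma Ext_covered T x : Ext T x <-> covered T x.
Proof.
  split.
  - intros [F [[f Ff] [HFT [Hc Hj]]]].
    assert (Hle : forall g, F g -> pfle g x).
    { intros g Fg w v Hg. apply (proj2 (Hj w v)). exists g; auto. }
    split.
    + exists f; auto.
    + intros w v Hx. apply Hj in Hx. destruct Hx as [g [Fg Hg]]. exists g; auto.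
  - intros [[s [Ts Hs]] Hcov].
    exists (fun g => T g /\ pfle g x). repeat split.
    + exists s; auto.
    + intros f [Tf _]; exact Tf.
    + intros f g [_ Hf] [_ Hg] w v u H1 H2.
      apply Hf in H1; apply Hg in H2; congruence.
    + intro Hx. destruct (Hcov _ _ Hx) as [g [Tg [Hg Hgw]]]. exists g; auto.
    + intros [g [[_ Hg] Hgw]]. apply Hg; exact Hgw.
Qed.

Lemma in_Ext T h : T h -> Ext T h.
Proof.
  intro Th. apply Ext_covered. split.
  - exists h; split; [exact Th| apply pfle_refl].
  - intros w v Hw; exists h; repeat split; auto. apply pfle_refl.
Qed.

Lemma Ext_incl_Ext T1 T2 : (forall s, T1 s -> Ext T2 s) -> forall x, Ext T1 x -> Ext T2 x.
Proof.
  intros H x Hx. apply Ext_covered in Hx. destruct Hx as [[s [Ts Hs]] Hc].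
  apply Ext_covered. split.
  - apply H, Ext_covered in Ts. destruct Ts as [[r [Tr Hr]] _].
    exists r; split; auto. eapply pfle_trans; eauto.
  - intros w v Hw. destruct (Hc _ _ Hw) as [t [Tt [Ht Htw]]].
    apply H, Ext_covered in Tt. destruct Tt as [_ Hc2].
    destruct (Hc2 _ _ Htw) as [r [Tr [Hr Hrw]]].
    exists r; repeat split; auto. eapply pfle_trans; eauto.
Qed.

Lemma Ext_incl T1 T2 : (forall s, T1 s -> T2 s) -> forall x, Ext T1 x -> Ext T2 x.
Proof. intros H; apply Ext_incl_Ext; intros s Hs; apply in_Ext, H, Hs. Qed.

Lemma Ext_valued_in T x : Ext T x -> valued_in T x.
Proof.
  intros Hx w v Hw. apply Ext_covered in Hx. destruct Hx as [_ Hc].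
  destruct (Hc _ _ Hw) as [s [Ts [_ Hs]]]. exists s; auto.
Qed.

Lemma space_le_refl T : space_le T T.
Proof. intros x Hx; exact Hx. Qed.

Lemma space_le_trans T1 T2 T3 : space_le T1 T2 -> space_le T2 T3 -> space_le T1 T3.
Proof. intros H12 H23 x Hx; apply H12, H23, Hx. Qed.

Lemma space_le_incl T1 T2 : (forall s, T1 s -> T2 s) -> space_le T2 T1.
Proof. exact (Ext_incl T1 T2). Qed.

Lemma tips_iff T h w :
  tips T h w <-> dom h w /\ ~ exists s, T s /\ pflt s h /\ dom s w.
Proof.
  unfold tips; split; intros [Hd Hn]; split; auto; intros [k [Hk [[Hle Hne] Hkw]]]; apply Hn.
  - exists k; repeat split; auto. apply in_Ext; auto.
  - apply Ext_covered in Hk. destruct Hk as [_ Hc].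
    unfold dom in Hkw. destruct (k w) eqn:Ekw; [|congruence].
    destruct (Hc _ _ Ekw) as [s [Ts [Hs Hsw]]].
    exists s; repeat split; auto.
    + eapply pfle_trans; eauto.
    + intro Heq; subst s. apply Hne. apply pfle_antisym; auto.
    + unfold dom; congruence.
Qed.

Lemma vee_prime_nonempty T h : vee_prime T -> T h -> nonempty h.
Proof.
  intros Hv Th. apply NNPP; intro Hn.
  apply (Hv (fun _ => False) h (fun f Hf => False_ind _ Hf)); auto.
  - intros f g [].
  - intros w v; split; [intro Hw; exfalso; apply Hn; exists w, v; auto | intros [f [[] _]]].
Qed.

Lemma vee_prime_incl T1 T2 : (forall h, T1 h -> T2 h) -> vee_prime T2 -> vee_prime T1.
Proof. intros Hs Hv F h HF Hc Hj Th. apply (Hv F h); auto. Qed.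

Lemma finite_fam_of_list T l : (forall h, T h -> In h l) -> finite_fam T.
Proof.
  revert T; induction l as [|a l IH]; intros T H.
  - exists nil; intro h; split; [apply H|intros []].
  - destruct (IH (fun h => T h /\ h <> a)) as [l' Hl'].
    { intros h [Th Hne]. destruct (H h Th) as [<-|Hin]; [congruence|auto]. }
    destruct (classic (T a)) as [Ta|nTa].
    + exists (a :: l'); intro h; split.
      * intro Th. destruct (classic (h = a)) as [->|Hne]; [left; auto|right; apply Hl'; auto].
      * intros [<-|Hin]; auto. apply Hl' in Hin; tauto.
    + exists l'; intro h; split.
      * intro Th. apply Hl'. split; auto. intros ->; auto.
      * intro Hin; apply Hl' in Hin; tauto.
Qed.

Lemma finite_fam_incl T1 T2 : (forall h, T1 h -> T2 h) -> finite_fam T2 -> finite_fam T1.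
Proof. intros Hs [l Hl]. apply (finite_fam_of_list _ l). intros h H; apply Hl, Hs, H. Qed.

Fixpoint join_list (l : list (pfun E V)) : pfun E V :=
  match l with nil => fun _ => None | f :: l' => pjoin f (join_list l') end.

Lemma join_list_Some l w v :
  join_list l w = Some v -> exists f, In f l /\ f w = Some v.
Proof.
  induction l as [|a l IH]; simpl; [discriminate|].
  unfold pjoin. destruct (a w) eqn:Ea.
  - intro H; inversion H; subst; exists a; auto.
  - intro H; destruct (IH H) as [f [Hf Hfw]]; exists f; auto.
Qed.

Lemma join_list_None l w : join_list l w = None -> forall f, In f l -> f w = None.
Proof.
  induction l as [|a l IH]; simpl; [intros _ f []|].
  unfold pjoin. destruct (a w) eqn:Ea; [discriminate|].
  intros H f [<-|Hf]; auto.
Qed.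

Lemma join_list_eq l x :
  (forall f, In f l -> pfle f x) ->
  (forall w v, x w = Some v -> exists f, In f l /\ f w = Some v) -> join_list l = x.
Proof.
  intros H1 H2. apply functional_extensionality; intro w.
  destruct (join_list l w) eqn:Ej.
  - destruct (join_list_Some _ _ _ Ej) as [f [Hf Hfw]]. symmetry; apply (H1 f Hf); auto.
  - destruct (x w) eqn:Ex; auto.
    destruct (H2 _ _ Ex) as [f [Hf Hfw]].
    rewrite (join_list_None _ _ Ej f Hf) in Hfw; discriminate.
Qed.

Lemma Ext_finite T : finite_fam T -> exists l, forall x, Ext T x -> In x l.
Proof.
  intros [l Hl]. exists (map join_list (sublists l)). intros x Hx.
  destruct (sublists_filter l (fun f => pfle f x)) as [s [Hs Hsf]].
  replace x with (join_list s) by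
    (apply join_list_eq;
     [ intros f Hf; apply Hsf in Hf; tauto
     | intros w v Hw; apply Ext_covered in Hx; destruct Hx as [_ Hc];
       destruct (Hc _ _ Hw) as [f [Tf [Hf Hfw]]]; exists f; split; auto;
       apply Hsf; split; auto; apply Hl; auto ]).
  apply in_map; auto.
Qed.

(* A ∨-prime space is recovered from [Ext] as its set of ∨-irreducible elements. *)
Lemma space_le_antisym T1 T2 :
  vee_prime T1 -> vee_prime T2 -> space_le T1 T2 -> space_le T2 T1 -> T1 = T2.
Proof.
  assert (Half : forall A B, vee_prime A -> space_le A B -> space_le B A ->
            forall h, A h -> B h).
  { intros A B HvA HBA HAB h Ah. apply NNPP; intro nBh.
    set (F := fun t => A t /\ exists s, B s /\ pfle t s /\ pfle s h).
    assert (HF : F h).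
    { apply (HvA F h).
      - intros f [Af _]; exact Af.
      - intros f g [_ [s [_ [Hf1 Hf2]]]] [_ [s' [_ [Hg1 Hg2]]]] w v u H1 H2.
        apply Hf1, Hf2 in H1. apply Hg1, Hg2 in H2. congruence.
      - intros w v; split.
        + intro Hw. assert (Bh : Ext B h) by (apply HAB, in_Ext; auto).
          apply Ext_covered in Bh. destruct Bh as [_ Hc].
          destruct (Hc _ _ Hw) as [s [Bs [Hs Hsw]]].
          assert (As : Ext A s) by (apply HBA, in_Ext; auto).
          apply Ext_covered in As. destruct As as [_ Hc2].
          destruct (Hc2 _ _ Hsw) as [t [At [Ht Htw]]].
          exists t; split; auto. split; auto. exists s; auto.
        + intros [f [[_ [s [_ [H1 H2]]]] Hf]]. apply H2, H1, Hf.
      - exact Ah. }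
    destruct HF as [_ [s [Bs [H1 H2]]]].
    assert (s = h) by (apply pfle_antisym; auto). subst; contradiction. }
  intros H1 H2 H12 H21. apply fam_ext; intro h; split; apply Half; auto.
Qed.


Definition some_input T w : option V :=
  match excluded_middle_informative (exists v, inputs T w v) with
  | left H => Some (proj1_sig (constructive_indefinite_description _ H))
  | right _ => None
  end.

Lemma some_input_spec T w :
  ((exists v, inputs T w v) -> exists v, some_input T w = Some v /\ inputs T w v) /\
  (~ (exists v, inputs T w v) -> some_input T w = None).
Proof.
  unfold some_input. destruct (excluded_middle_informative _) as [H|H]; split; intro H'.
  - destruct (constructive_indefinite_description _ H) as [v Hv]; simpl. exists v; auto.
  - contradiction.
  - contradiction.
  - reflexivity.
Qed.

Lemma total_extension T x : valued_in T x -> exists t, total_in_prod T t /\ pfle x t.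
Proof.
  intro Hx. exists (pjoin x (some_input T)). split.
  - intro w. split.
    + intro He. unfold pjoin. destruct (x w) eqn:Exw.
      * exists v; split; auto.
      * apply events_inputs in He. apply (proj1 (some_input_spec T w) He).
    + intro Hne. unfold pjoin. destruct (x w) eqn:Exw.
      * exfalso; apply Hne, events_inputs; exists v; apply Hx; auto.
      * apply (proj2 (some_input_spec T w)). intro H; apply Hne, events_inputs, H.
  - apply pjoin_l.
Qed.

Lemma total_valued_in T t : total_in_prod T t -> valued_in T t.
Proof.
  intros Ht w v Hw. destruct (Ht w) as [H1 H2].
  destruct (classic (events T w)) as [He|Hne].
  - destruct (H1 He) as [u [Hu Hi]]. congruence.
  - rewrite (H2 Hne) in Hw; discriminate.
Qed.

Lemma total_in_prod_inputs T1 T2 :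
  (forall w v, inputs T1 w v <-> inputs T2 w v) ->
  forall t, total_in_prod T1 t -> total_in_prod T2 t.
Proof.
  intros Hi t Ht w. destruct (Ht w) as [H1 H2].
  assert (He : events T1 w <-> events T2 w).
  { rewrite !events_inputs. split; intros [v Hv]; exists v; apply Hi; auto. }
  split.
  - intro H. destruct (H1 (proj2 He H)) as [v [Hv Hvi]]. exists v; split; auto; apply Hi; auto.
  - intro H. apply H2. intro H'; apply H, He, H'.
Qed.

Lemma total_maximal T t x : total_in_prod T t -> valued_in T x -> pfle t x -> x = t.
Proof.
  intros Ht Hx Hle. apply pfle_antisym; auto.
  intros w v Hw. destruct (Ht w) as [H1 _].
  destruct (H1 (inputs_events _ _ _ (Hx _ _ Hw))) as [u [Hu _]].
  rewrite (Hle _ _ Hu) in Hw. congruence.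
Qed.

Lemma free_choice_of_totals T :
  (forall t, total_in_prod T t -> Ext T t) -> free_choice T.
Proof.
  intros H k; split.
  - intros [Hk Hmax]. destruct (total_extension T k (Ext_valued_in _ _ Hk)) as [t [Ht Hle]].
    rewrite <- (Hmax t (H t Ht) Hle). exact Ht.
  - intros Ht. split; [apply H; auto|].
    intros k' Hk' Hle. apply (total_maximal T); auto. apply Ext_valued_in; auto.
Qed.

Lemma free_choice_exists_maxExt T : free_choice T -> exists k, maxExt T k.
Proof.
  intro Hfc. destruct (total_extension T (fun _ => None)) as [t [Ht _]].
  { intros w v H; discriminate. }
  exists t; apply Hfc, Ht.
Qed.

Lemma maxExt_inputs T1 T2 :
  free_choice T1 -> free_choice T2 -> (forall w v, inputs T1 w v <-> inputs T2 w v) ->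
  forall k, maxExt T1 k <-> maxExt T2 k.
Proof.
  intros F1 F2 Hi k. rewrite (F1 k), (F2 k).
  split; apply total_in_prod_inputs; firstorder.
Qed.

Lemma inputs_space_le T U :
  space_le U T -> (forall u, U u -> valued_in T u) ->
  forall w v, inputs U w v <-> inputs T w v.
Proof.
  intros HUT HU w v; split.
  - intros [u [Uu Hu]]. apply (HU u Uu), Hu.
  - intros [t [Tt Ht]]. assert (H := HUT t (in_Ext _ _ Tt)).
    apply Ext_covered in H. destruct H as [_ Hc].
    destruct (Hc _ _ Ht) as [u [Uu [_ Hu]]]. exists u; auto.
Qed.

Lemma free_choice_space_le T U :
  free_choice T -> space_le U T -> (forall w v, inputs U w v <-> inputs T w v) ->
  free_choice U.
Proof.
  intros Hfc HUT Hi. apply free_choice_of_totals. intros t Ht.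
  apply HUT, Hfc, (total_in_prod_inputs U); auto.
Qed.

(** * Trimming and irreducible elements *)

Definition trim S T : fam E V := fun s => S s /\ valued_in T s.

Lemma trim_space_le S T : space_le S T -> space_le (trim S T) T.
Proof.
  intros HST x Hx. assert (Hv := Ext_valued_in _ _ Hx). apply HST, Ext_covered in Hx.
  destruct Hx as [[s [Ss Hs]] Hc]. apply Ext_covered. split.
  - exists s; repeat split; auto. intros w v Hw; apply Hv, Hs, Hw.
  - intros w v Hw. destruct (Hc _ _ Hw) as [r [Sr [Hr Hrw]]].
    exists r; repeat split; auto. intros w' v' Hw'; apply Hv, Hr, Hw'.
Qed.

Lemma trim_inputs S T :
  space_le S T -> forall w v, inputs (trim S T) w v <-> inputs T w v.
Proof.
  intro HST. apply inputs_space_le; [apply trim_space_le, HST|]. intros u [_ Hu]; exact Hu.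
Qed.

(* Everything below an element of [trim S T] is again valued in the inputs of [T]. *)
Lemma unique_tips_trim S T : unique_tips S -> unique_tips (trim S T).
Proof.
  intros Hut h [Sh Hvh].
  assert (Heq : forall w, tips (trim S T) h w <-> tips S h w).
  { intro w. rewrite !tips_iff. split; intros [Hd Hn]; split; auto; intro Hex; apply Hn.
    - destruct Hex as [s [Ss [Hlt Hsw]]].
      exists s; split; [split; [exact Ss|]|auto].
      intros w1 v1 H1; apply Hvh, (proj1 Hlt), H1.
    - destruct Hex as [s [[Ss _] [Hlt Hsw]]]. exists s; auto. }
  destruct (Hut h Sh) as [w [Hw Hu]].
  exists w; split; [apply Heq; auto|]. intros w' Hw'; apply Hu, Heq, Hw'.
Qed.

Lemma trim_CC_cand S T :
  space S -> unique_tips S -> free_choice T -> space_le S T -> CC_cand T (trim S T).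
Proof.
  intros [HfS HvS] Hut HfcT HST.
  assert (Hincl : forall h, trim S T h -> S h) by (intros h [H _]; exact H).
  split; [split|split; [split|]].
  - apply (finite_fam_incl _ S Hincl HfS).
  - apply (vee_prime_incl _ S Hincl HvS).
  - apply (free_choice_space_le T); auto; [apply trim_space_le|apply trim_inputs]; auto.
  - apply unique_tips_trim, Hut.
  - apply trim_space_le, HST.
Qed.

Lemma CC_inputs T S :
  free_choice T -> CC T S -> forall w v, inputs S w v <-> inputs T w v.
Proof.
  intros HfcT [[Hsp [[_ Hut] HST]] Hmax].
  assert (Htrim : trim S T = S).
  { apply Hmax; [apply trim_CC_cand; auto|].
    apply space_le_incl. intros h [H _]; exact H. }
  intros w v. rewrite <- (trim_inputs S T HST), Htrim. reflexivity.
Qed.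

Lemma CC_cand_trim_eq T A B :
  vee_prime A -> CC_cand T B -> space_le A B -> space_le (trim B T) A -> B = A.
Proof.
  intros HvA [[_ HvB] _] HAB HBA. apply space_le_antisym; auto.
  apply (space_le_trans _ (trim B T)); auto. apply space_le_incl. intros h [H _]; exact H.
Qed.

Definition irreducibles L : fam E V :=
  fun x => L x /\ ~ is_join (fun y => L y /\ pflt y x) x.

Lemma vee_prime_irreducibles L : vee_prime (irreducibles L).
Proof.
  intros F h HF Hc Hj [Hh Hirr]. apply NNPP; intro Hn. apply Hirr.
  intros w v; split.
  - intro Hw. apply Hj in Hw. destruct Hw as [f [Ff Hfw]]. exists f; split; auto.
    split; [apply (HF f Ff)|]. split.
    + intros w' v' H'. apply Hj. exists f; auto.
    + intros ->; contradiction.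
  - intros [y [[_ [Hy _]] Hyw]]. apply Hy; auto.
Qed.

(* Minimal counterexample: a reducible element is the join of strictly smaller ones. *)
Lemma Ext_irreducibles L :
  finite_fam L -> (forall x, L x -> nonempty x) -> (forall x, Ext L x -> L x) ->
  forall x, Ext (irreducibles L) x <-> L x.
Proof.
  intros [l Hl] Hne Hclosed x. split.
  - intro Hx. apply Hclosed. revert Hx. apply Ext_incl. intros y [Hy _]; exact Hy.
  - intros Hx. apply NNPP; intro Hnx.
    destruct (list_minimal (@pflt E V) (fun y => L y /\ ~ Ext (irreducibles L) y)
               pflt_irrefl pflt_trans l) as [m [_ [[Hm Hmn] Hmin]]].
    { exists x; split; auto. apply Hl; auto. }
    apply Hmn. assert (Hred : is_join (fun y => L y /\ pflt y m) m).
    { apply NNPP; intro Hirr. apply Hmn, in_Ext. split; auto. }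
    assert (Hsub : forall y, L y -> pflt y m -> Ext (irreducibles L) y).
    { intros y Hy Hym. apply NNPP; intro Hny. apply (Hmin y); auto. apply Hl; auto. }
    apply Ext_covered. split.
    + destruct (Hne m Hm) as [w [v Hw]]. apply Hred in Hw. destruct Hw as [y [[Hy Hym] _]].
      destruct (proj1 (Ext_covered _ _) (Hsub y Hy Hym)) as [[a [Aa Ha]] _].
      exists a; split; auto. eapply pfle_trans; [exact Ha|apply Hym].
    + intros w v Hw. apply Hred in Hw. destruct Hw as [y [[Hy Hym] Hyw]].
      destruct (proj1 (Ext_covered _ _) (Hsub y Hy Hym)) as [_ Hc].
      destruct (Hc _ _ Hyw) as [a [Aa [Ha Haw]]].
      exists a; split; [exact Aa|split; [|exact Haw]].
      eapply pfle_trans; [exact Ha|apply Hym].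
Qed.

Lemma irreducible_tip L x : irreducibles L x -> exists e, tips L x e.
Proof.
  intros [_ Hirr]. apply NNPP; intro Hn. apply Hirr. intros w v; split.
  - intro Hw. assert (Hnt : ~ tips L x w) by (intro H; apply Hn; eauto).
    rewrite tips_iff in Hnt.
    assert (H : exists y, L y /\ pflt y x /\ dom y w)
      by (apply NNPP; intro H; apply Hnt; split; [unfold dom; congruence|exact H]).
    destruct H as [y [Hy [Hyx Hyw]]]. exists y; split; [split; auto|].
    unfold dom in Hyw. destruct (y w) eqn:Eyw; [|congruence].
    rewrite ((proj1 Hyx) _ _ Eyw) in Hw. congruence.
  - intros [y [[_ Hyx] Hyw]]. apply (proj1 Hyx); auto.
Qed.

Lemma unique_tips_irreducibles L :
  (forall x, Ext (irreducibles L) x <-> L x) ->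
  (forall x e1 e2, L x -> tips L x e1 -> tips L x e2 -> e1 = e2) ->
  unique_tips (irreducibles L).
Proof.
  intros HExt Huniq x Hx.
  assert (Htips : forall e, tips (irreducibles L) x e <-> tips L x e).
  { intro e. rewrite (tips_iff L). unfold tips.
    split; intros [Hd Hn]; split; auto; intros [y [Hy Hlt]]; apply Hn; exists y;
      split; auto; apply HExt; auto. }
  destruct (irreducible_tip L x Hx) as [e He].
  exists e; split; [apply Htips, He|].
  intros e' He'. apply (Huniq x); [apply Hx|apply Htips, He'|exact He].
Qed.


End PartialFunctions.

(** * Conditional sequential composition *)

Section Composition.
Variables (E V : Type) (Th : fam E V) (Th' : pfun E V -> fam E V).
Hypothesis HTh : space Th.
Hypothesis HfcTh : free_choice Th.
Hypothesis HTh' : forall k, maxExt Th k -> space (Th' k).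
Hypothesis Hfc' : forall k, maxExt Th k -> free_choice (Th' k).
Hypothesis Hdisj : forall k, maxExt Th k -> forall w, events Th w -> events (Th' k) w -> False.
Hypothesis Hsame : forall k1 k2, maxExt Th k1 -> maxExt Th k2 ->
  (forall w, events (Th' k1) w <-> events (Th' k2) w) /\
  (forall w v, events (Th' k1) w -> (inputs (Th' k1) w v <-> inputs (Th' k2) w v)).

Implicit Types (b f k s x y : pfun E V) (B S : fam E V).

Lemma maxExt_defined k w : maxExt Th k -> events Th w -> exists v, k w = Some v.
Proof. intros Hk Hw. destruct (proj1 (proj1 (HfcTh k) Hk w) Hw) as [v [Hv _]]; eauto. Qed.

Lemma maxExt_valued_in k : maxExt Th k -> valued_in Th k.
Proof. intros [Hk _]; apply Ext_valued_in, Hk. Qed.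

Lemma inputs_Th'_indep k1 k2 : maxExt Th k1 -> maxExt Th k2 ->
  forall w v, inputs (Th' k1) w v <-> inputs (Th' k2) w v.
Proof.
  intros H1 H2 w v. destruct (Hsame k1 k2 H1 H2) as [He Hi]. split; intro H.
  - apply Hi; auto. apply (inputs_events _ _ v H).
  - apply Hi; auto. apply He, (inputs_events _ _ v H).
Qed.

Lemma Th'_valued_outside k x w v :
  maxExt Th k -> valued_in (Th' k) x -> x w = Some v -> k w = None.
Proof.
  intros Hk Hx Hw. apply (proj2 (proj1 (HfcTh k) Hk w)).
  intro He. apply (Hdisj k Hk w He), (inputs_events _ _ v), Hx, Hw.
Qed.

Lemma Th_valued_le_pjoin k x b :
  maxExt Th k -> valued_in Th b -> pfle b (pjoin k x) -> pfle b k.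
Proof.
  intros Hk Hb Hle w v Hw.
  destruct (maxExt_defined k w Hk (inputs_events _ _ v (Hb _ _ Hw))) as [u Hu].
  assert (H := Hle _ _ Hw). unfold pjoin in H. rewrite Hu in H. congruence.
Qed.

Lemma pjoin_not_le_Th_valued k x b :
  maxExt Th k -> valued_in Th b -> valued_in (Th' k) x -> nonempty x -> ~ pfle (pjoin k x) b.
Proof.
  intros Hk Hb Hx [w [v Hw]] Hle.
  assert (H := Hle w v). rewrite pjoin_r in H by (eapply Th'_valued_outside; eauto).
  apply (Hdisj k Hk w).
  - apply (inputs_events _ _ v), Hb, H, Hw.
  - apply (inputs_events _ _ v), Hx, Hw.
Qed.

Lemma pjoin_le_pjoin k k2 x y :
  maxExt Th k -> maxExt Th k2 -> valued_in (Th' k) x -> valued_in (Th' k2) y ->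
  pfle (pjoin k2 y) (pjoin k x) -> k2 = k /\ pfle y x.
Proof.
  intros Hk Hk2 Hx Hy Hle.
  assert (Hkk : pfle k2 k).
  { apply (Th_valued_le_pjoin k x); [exact Hk|apply maxExt_valued_in, Hk2|].
    eapply pfle_trans; [apply pjoin_l|exact Hle]. }
  assert (k = k2) by (apply (proj2 Hk2); [apply Hk|exact Hkk]). subst k2.
  split; auto. intros w v Hw.
  assert (Hn : k w = None) by (eapply Th'_valued_outside; eauto).
  assert (H := Hle w v). rewrite !pjoin_r in H by exact Hn. auto.
Qed.

Lemma pjoin_inj k x y :
  maxExt Th k -> valued_in (Th' k) x -> valued_in (Th' k) y -> pjoin k x = pjoin k y -> x = y.
Proof.
  intros Hk Hx Hy Heq. apply pfle_antisym.
  - apply (pjoin_le_pjoin k k y x); auto. rewrite Heq; apply pfle_refl.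
  - apply (pjoin_le_pjoin k k x y); auto. rewrite Heq; apply pfle_refl.
Qed.

(* [seqc B B'] indexed by [maxExt Th] instead of [maxExt B] (they agree for refinements, see
   [seqc_refinement]), with [pjoin] in place of the join. *)
Definition compose B (B' : pfun E V -> fam E V) : fam E V :=
  fun h => B h \/ exists k x, maxExt Th k /\ B' k x /\ h = pjoin k x.

Definition refinement B (B' : pfun E V -> fam E V) : Prop :=
  CC_cand Th B /\ (forall w v, inputs B w v <-> inputs Th w v) /\
  forall k, maxExt Th k ->
    CC_cand (Th' k) (B' k) /\ forall w v, inputs (B' k) w v <-> inputs (Th' k) w v.

Lemma seqc_compose B (B' : pfun E V -> fam E V) :
  (forall k, maxExt B k <-> maxExt Th k) ->
  (forall k, maxExt Th k -> forall x, B' k x -> valued_in (Th' k) x) ->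
  seqc B B' = compose B B'.
Proof.
  intros HB HB'. apply fam_ext; intro h. unfold seqc, compose.
  assert (Hj : forall k x, maxExt Th k -> B' k x -> join2 k x h <-> h = pjoin k x).
  { intros k x Hk Hx. apply join2_pjoin. intros w v u H1 H2.
    rewrite (Th'_valued_outside k x w u Hk (HB' k Hk x Hx) H2) in H1; discriminate. }
  split; intros [H|[k [x [Hk [Hx Hh]]]]]; auto; right; exists k, x.
  - apply HB in Hk. split; [exact Hk|split; [exact Hx|apply Hj; auto]].
  - split; [apply HB, Hk|split; [exact Hx|apply Hj; auto]].
Qed.

Lemma Ext_compose_pjoin B (B' : pfun E V -> fam E V) k x :
  maxExt Th k -> Ext B k -> Ext (B' k) x -> Ext (compose B B') (pjoin k x).
Proof.
  intros Hk HkB Hx. apply Ext_covered in HkB as [_ HcK].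
  apply Ext_covered in Hx as [[y [Hy Hyx]] HcX].
  apply Ext_covered. split.
  - exists (pjoin k y); split; [right; exists k, y; auto|apply pjoin_mono_r; auto].
  - intros w v Hw. destruct (k w) eqn:Ek.
    + unfold pjoin in Hw; rewrite Ek in Hw. injection Hw as ->.
      destruct (HcK _ _ Ek) as [b [Bb [Hb Hbw]]]. exists b; split; [left; auto|split; auto].
      eapply pfle_trans; [exact Hb|apply pjoin_l].
    + rewrite pjoin_r in Hw by auto. destruct (HcX _ _ Hw) as [z [Hz [Hzx Hzw]]].
      exists (pjoin k z); split; [right; exists k, z; auto|split; [apply pjoin_mono_r; auto|]].
      rewrite pjoin_r; auto.
Qed.

Section Refinement.
Variables (B : fam E V) (B' : pfun E V -> fam E V).
Hypothesis HB : refinement B B'.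

Lemma refinement_valued_l b : B b -> valued_in Th b.
Proof. intros Hb w v Hw. apply (proj1 (proj2 HB)). exists b; auto. Qed.

Lemma refinement_valued_r k x : maxExt Th k -> B' k x -> valued_in (Th' k) x.
Proof. intros Hk Hx w v Hw. apply (proj2 (proj2 (proj2 HB) k Hk)). exists x; auto. Qed.

Lemma refinement_nonempty_r k x : maxExt Th k -> B' k x -> nonempty x.
Proof.
  intros Hk Hx. destruct (proj2 (proj2 HB) k Hk) as [[[_ Hv] _] _].
  eapply vee_prime_nonempty; eauto.
Qed.

Lemma refinement_Ext_maxExt k : maxExt Th k -> Ext B k.
Proof. intros [Hk _]. apply (proj2 (proj2 (proj1 HB))), Hk. Qed.

Lemma seqc_refinement : seqc B B' = compose B B'.
Proof.
  destruct HB as [[_ [[HfcB _] _]] [Hi _]]. apply seqc_compose.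
  - apply maxExt_inputs; auto.
  - intros k Hk x. apply refinement_valued_r, Hk.
Qed.

Lemma compose_le_Th_valued f b : compose B B' f -> valued_in Th b -> pfle f b -> B f.
Proof.
  intros [Bf|[k [x [Hk [Hx ->]]]]] Hb Hle; auto. exfalso.
  apply (pjoin_not_le_Th_valued k x b); auto;
    [eapply refinement_valued_r|eapply refinement_nonempty_r]; eauto.
Qed.

Lemma compose_le_pjoin k x f :
  maxExt Th k -> valued_in (Th' k) x -> compose B B' f -> pfle f (pjoin k x) ->
  (B f /\ pfle f k) \/ exists y, B' k y /\ pfle y x /\ f = pjoin k y.
Proof.
  intros Hk Hx [Bf|[k2 [y [Hk2 [Hy ->]]]]] Hle.
  - left; split; auto. apply (Th_valued_le_pjoin k x); auto. apply refinement_valued_l, Bf.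
  - right. destruct (pjoin_le_pjoin k k2 x y) as [-> Hyx]; auto.
    + apply (refinement_valued_r k2); auto.
    + exists y; auto.
Qed.

Lemma inputs_compose k0 : maxExt Th k0 ->
  forall w v, inputs (compose B B') w v <-> inputs Th w v \/ inputs (Th' k0) w v.
Proof.
  intros Hk0 w v. split.
  - intros [h [[Bh|[k [x [Hk [Hx ->]]]]] Hw]].
    + left. apply (refinement_valued_l h); auto.
    + unfold pjoin in Hw. destruct (k w) eqn:Ek.
      * left. injection Hw as <-. apply (maxExt_valued_in k Hk); auto.
      * right. apply (inputs_Th'_indep k k0); auto. apply (refinement_valued_r k x); auto.
  - intros [H|H].
    + apply (proj1 (proj2 HB)) in H as [b [Bb Hb]]. exists b; split; auto; left; auto.
    + apply (proj2 (proj2 (proj2 HB) k0 Hk0)) in H as [y [Hy Hyw]].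
      exists (pjoin k0 y); split; [right; exists k0, y; auto|].
      rewrite pjoin_r; auto. eapply Th'_valued_outside; eauto.
      apply (refinement_valued_r k0); auto.
Qed.

Lemma compose_finite : finite_fam (compose B B').
Proof.
  destruct (Ext_finite Th (proj1 HTh)) as [lM HlM].
  assert (Hpart : forall l, exists l', forall h,
             (exists k x, In k l /\ maxExt Th k /\ B' k x /\ h = pjoin k x) -> In h l').
  { induction l as [|a l IH].
    - exists nil. intros h [k [x [[] _]]].
    - destruct IH as [l' Hl']. destruct (classic (maxExt Th a)) as [Ha|Ha].
      + destruct (proj2 (proj2 HB) a Ha) as [[[[la Hla] _] _] _].
        exists (map (pjoin a) la ++ l'). intros h [k [x [[<-|Hin] [Hk [Hx ->]]]]].
        * apply in_or_app; left; apply in_map, Hla, Hx.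
        * apply in_or_app; right; apply Hl'; exists k, x; auto.
      + exists l'. intros h [k [x [[<-|Hin] [Hk [Hx ->]]]]]; [contradiction|].
        apply Hl'; exists k, x; auto. }
  destruct (Hpart lM) as [l Hl]. destruct HB as [[[[lB HlB] _] _] _].
  apply (finite_fam_of_list _ (lB ++ l)). intros h [Bh|[k [x [Hk [Hx ->]]]]].
  - apply in_or_app; left; apply HlB; auto.
  - apply in_or_app; right; apply Hl; exists k, x; split; [apply HlM, Hk|auto].
Qed.

(* A compatible family whose join is [pjoin k x] consists of elements [pjoin k y] with
   [y] below [x]; ∨-primeness of [B' k] applied to these [y] concludes. *)
Lemma compose_vee_prime : vee_prime (compose B B').
Proof.
  intros F h HF Hc Hj Hh.
  assert (Hle : forall f, F f -> pfle f h) by (intros f Ff w v Hw; apply Hj; exists f; auto).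
  destruct Hh as [Bh|[k [x [Hk [Hx ->]]]]].
  - destruct HB as [[[_ HvB] _] _]. apply (HvB F h); auto.
    intros f Ff. apply (compose_le_Th_valued f h); auto. apply refinement_valued_l, Bh.
  - assert (Hxv := refinement_valued_r k x Hk Hx).
    assert (Hout : forall y w v, B' k y -> y w = Some v -> k w = None)
      by (intros y w v Hy; apply Th'_valued_outside; auto; apply (refinement_valued_r k y Hk Hy)).
    set (G := fun y => B' k y /\ F (pjoin k y)).
    assert (HG : G x).
    { destruct (proj2 (proj2 HB) k Hk) as [[[_ Hv] _] _]. apply (Hv G x); auto.
      - intros y [Hy _]; exact Hy.
      - intros f g [Hf Ff] [Hg Fg] w v u H1 H2.
        apply (Hc _ _ Ff Fg w); rewrite pjoin_r; eauto.
      - intros w v; split.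
        + intro Hw. assert (Hw2 : pjoin k x w = Some v) by (rewrite pjoin_r; eauto).
          apply Hj in Hw2 as [f [Ff Hf]].
          destruct (compose_le_pjoin k x f Hk Hxv (HF f Ff) (Hle f Ff))
            as [[_ Hfk]|[y [Hy [_ ->]]]].
          * apply Hfk in Hf. rewrite (Hout x w v Hx Hw) in Hf; discriminate.
          * exists y; split; [split; auto|]. rewrite pjoin_r in Hf; eauto.
        + intros [y [[Hy Fy] Hyw]]. assert (H := Hle _ Fy w v).
          rewrite !pjoin_r in H by eauto. auto. }
    destruct HG as [_ H]; exact H.
Qed.

Lemma total_compose_split t :
  total_in_prod (compose B B') t ->
  exists k t', maxExt Th k /\ total_in_prod (Th' k) t' /\ t = pjoin k t'.
Proof.
  intro Ht. destruct (free_choice_exists_maxExt Th HfcTh) as [k0 Hk0].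
  assert (Hinp := inputs_compose k0 Hk0).
  set (k := restrict (events Th) t).
  assert (Hk : maxExt Th k).
  { apply HfcTh. intro w; split.
    - intro He. destruct (proj1 (Ht w)) as [v [Hv Hvi]].
      { apply events_inputs in He as [v0 Hv0]. apply events_inputs. exists v0; apply Hinp; auto. }
      exists v. unfold k; rewrite restrict_in; auto. split; auto.
      destruct (proj1 (Hinp w v) Hvi) as [Hi|Hi]; auto.
      exfalso; apply (Hdisj k0 Hk0 w He (inputs_events _ _ _ Hi)).
    - intro Hne; unfold k; apply restrict_out; auto. }
  set (t' := restrict (events (Th' k)) t).
  exists k, t'; split; [exact Hk|split].
  - intro w; split.
    + intro He. destruct (proj1 (Ht w)) as [v [Hv Hvi]].
      { apply events_inputs in He as [v0 Hv0]. apply events_inputs. exists v0; apply Hinp.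
        right. apply (inputs_Th'_indep k k0); auto. }
      exists v. unfold t'; rewrite restrict_in; auto. split; auto.
      destruct (proj1 (Hinp w v) Hvi) as [Hi|Hi].
      * exfalso; apply (Hdisj k Hk w (inputs_events _ _ _ Hi) He).
      * apply (inputs_Th'_indep k k0); auto.
    + intro Hne; unfold t'; apply restrict_out; auto.
  - apply functional_extensionality; intro w. unfold pjoin.
    destruct (classic (events Th w)) as [He|Hne].
    + assert (Hkw : k w = t w) by (apply restrict_in, He). rewrite Hkw.
      destruct (t w) eqn:Etw; auto.
      unfold t', restrict. destruct (excluded_middle_informative _); congruence.
    + assert (Hkw : k w = None) by (apply restrict_out, Hne). rewrite Hkw. unfold t'.
      destruct (classic (events (Th' k) w)) as [He'|Hne']; [rewrite restrict_in; auto|].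
      rewrite restrict_out by exact Hne'. destruct (t w) eqn:Etw; auto.
      apply (total_valued_in _ _ Ht), Hinp in Etw as [Hi|Hi].
      * contradiction (Hne (inputs_events _ _ _ Hi)).
      * exfalso; apply Hne', (inputs_events _ _ v), (inputs_Th'_indep k k0); auto.
Qed.

Lemma compose_free_choice : free_choice (compose B B').
Proof.
  apply free_choice_of_totals. intros t Ht.
  destruct (total_compose_split t Ht) as [k [t' [Hk [Ht' ->]]]].
  apply Ext_compose_pjoin; [exact Hk|apply refinement_Ext_maxExt, Hk|].
  destruct (proj2 (proj2 HB) k Hk) as [[_ [_ Hle]] _].
  apply Hle, (proj1 (proj2 (Hfc' k Hk t') Ht')).
Qed.

Lemma tips_compose_l h w : B h -> tips (compose B B') h w <-> tips B h w.
Proof.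
  intro Bh. rewrite !tips_iff. split; intros [Hd Hn]; split; auto; intro Hex; apply Hn.
  - destruct Hex as [s [Bs Hs]]. exists s; split; [left|]; auto.
  - destruct Hex as [s [Cs [Hlt Hsw]]]. exists s; split; auto.
    apply (compose_le_Th_valued s h); auto; [apply refinement_valued_l, Bh|apply Hlt].
Qed.

Lemma tips_compose_r k x w :
  maxExt Th k -> B' k x -> tips (compose B B') (pjoin k x) w <-> tips (B' k) x w.
Proof.
  intros Hk Hx. assert (Hxv := refinement_valued_r k x Hk Hx).
  rewrite !tips_iff. split; intros [Hd Hn].
  - assert (Hkw : k w = None).
    { destruct (k w) as [u|] eqn:Ekw; auto. exfalso.
      destruct (proj1 (Ext_covered _ _) (refinement_Ext_maxExt k Hk)) as [_ Hc].
      destruct (Hc _ _ Ekw) as [b [Bb [Hb Hbw]]].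
      apply Hn. exists b; split; [left; auto|split; [split|unfold dom; congruence]].
      + eapply pfle_trans; [exact Hb|apply pjoin_l].
      + intros Heq. apply (pjoin_not_le_Th_valued k x b Hk); auto.
        * apply refinement_valued_l, Bb.
        * apply (refinement_nonempty_r k x Hk Hx).
        * rewrite Heq; apply pfle_refl. }
    unfold dom in Hd; rewrite pjoin_r in Hd by exact Hkw.
    split; [exact Hd|]. intros [y [Hy [[Hyx Hne] Hyw]]]. apply Hn.
    exists (pjoin k y); split; [right; exists k, y; auto|split; [split|]].
    + apply pjoin_mono_r, Hyx.
    + intro Heq. apply Hne, (pjoin_inj k); auto. apply (refinement_valued_r k y Hk Hy).
    + unfold dom; rewrite pjoin_r; auto.
  - unfold dom in Hd. destruct (x w) as [v|] eqn:Exw; [|congruence].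
    assert (Hkw : k w = None) by (eapply Th'_valued_outside; eauto).
    split; [unfold dom; rewrite pjoin_r; congruence|].
    intros [s [Cs [[Hle Hne] Hsw]]].
    destruct (compose_le_pjoin k x s Hk Hxv Cs Hle) as [[_ Hsk]|[y [Hy [Hyx ->]]]].
    + unfold dom in Hsw. destruct (s w) eqn:Esw; [|congruence]. apply Hsk in Esw. congruence.
    + apply Hn. exists y; split; auto. split; [split; auto|].
      * intros ->; apply Hne; reflexivity.
      * unfold dom in *; rewrite pjoin_r in Hsw; auto.
Qed.

Lemma compose_unique_tips : unique_tips (compose B B').
Proof.
  intros h [Bh|[k [x [Hk [Hx ->]]]]].
  - destruct HB as [[_ [[_ Hut] _]] _]. destruct (Hut h Bh) as [w [Hw Hu]].
    exists w; split; [apply tips_compose_l; auto|].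
    intros w' Hw'. apply Hu, (tips_compose_l h w' Bh), Hw'.
  - destruct (proj2 (proj2 HB) k Hk) as [[_ [[_ Hut] _]] _]. destruct (Hut x Hx) as [w [Hw Hu]].
    exists w; split; [apply tips_compose_r; auto|].
    intros w' Hw'. apply Hu, (tips_compose_r k x w' Hk Hx), Hw'.
Qed.

Lemma compose_Ext_l x : valued_in Th x -> Ext (compose B B') x -> Ext B x.
Proof.
  intros Hx HxC. apply Ext_covered in HxC as [[s [Cs Hs]] Hc]. apply Ext_covered. split.
  - exists s; split; auto. apply (compose_le_Th_valued s x); auto.
  - intros w v Hw. destruct (Hc _ _ Hw) as [s' [Cs' [Hs' Hs'w]]].
    exists s'; split; auto. apply (compose_le_Th_valued s' x); auto.
Qed.

Lemma compose_Ext_r k x :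
  maxExt Th k -> valued_in (Th' k) x -> nonempty x ->
  Ext (compose B B') (pjoin k x) -> Ext (B' k) x.
Proof.
  intros Hk Hx [w0 [v0 Hw0]] HxC. apply Ext_covered in HxC as [_ Hc].
  assert (Hcov : forall w v, x w = Some v -> exists y, B' k y /\ pfle y x /\ y w = Some v).
  { intros w v Hw. assert (Hkw : k w = None) by (eapply Th'_valued_outside; eauto).
    destruct (Hc w v) as [s [Cs [Hs Hsw]]]; [rewrite pjoin_r; auto|].
    destruct (compose_le_pjoin k x s Hk Hx Cs Hs) as [[_ Hsk]|[y [Hy [Hyx ->]]]].
    - apply Hsk in Hsw. congruence.
    - exists y; split; auto; split; auto. rewrite pjoin_r in Hsw; auto. }
  apply Ext_covered. split; [|exact Hcov].
  destruct (Hcov w0 v0 Hw0) as [y [Hy [Hyx _]]]. exists y; auto.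
Qed.

End Refinement.

Lemma compose_space_le A (A' : pfun E V -> fam E V) B (B' : pfun E V -> fam E V) :
  (forall k, maxExt Th k -> Ext A k) -> space_le A B ->
  (forall k, maxExt Th k -> space_le (A' k) (B' k)) ->
  space_le (compose A A') (compose B B').
Proof.
  intros HAk HAB HAB'. unfold space_le; apply Ext_incl_Ext. intros s [Bs|[k [x [Hk [Hx ->]]]]].
  - apply (Ext_incl A); [intros h Hh; left; exact Hh|]. apply HAB, in_Ext, Bs.
  - apply Ext_compose_pjoin; auto. apply HAB', in_Ext; auto.
Qed.

Lemma compose_space_le_inv A (A' : pfun E V -> fam E V) B (B' : pfun E V -> fam E V) :
  refinement A A' -> refinement B B' -> space_le (compose A A') (compose B B') ->
  space_le A B /\ forall k, maxExt Th k -> space_le (A' k) (B' k).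
Proof.
  intros HA HB Hle. split.
  - intros x Hx. apply (compose_Ext_l A A' HA).
    + intros w v Hw. apply (proj1 (proj2 HB)), (Ext_valued_in B x Hx), Hw.
    + apply Hle. revert Hx. apply Ext_incl. intros h Hh; left; exact Hh.
  - intros k Hk x Hx. destruct (proj2 (proj2 HB) k Hk) as [[[_ Hv] _] Hi].
    apply (compose_Ext_r A A' HA k x Hk).
    + intros w v Hw. apply Hi, (Ext_valued_in _ x Hx), Hw.
    + destruct (proj1 (Ext_covered _ _) Hx) as [[s [Bs Hs]] _].
      destruct (vee_prime_nonempty _ s Hv Bs) as [w [v Hw]]. exists w, v; apply Hs, Hw.
    + apply Hle, Ext_compose_pjoin; [exact Hk|apply (refinement_Ext_maxExt B B' HB k Hk)|exact Hx].
Qed.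

Lemma compose_CC_cand B (B' : pfun E V -> fam E V) :
  refinement B B' -> CC_cand (compose Th Th') (compose B B').
Proof.
  intros HB. split; [split|split; [split|]].
  - apply compose_finite, HB.
  - apply compose_vee_prime, HB.
  - apply compose_free_choice, HB.
  - apply compose_unique_tips, HB.
  - apply compose_space_le.
    + apply (refinement_Ext_maxExt B B' HB).
    + apply (proj2 (proj2 (proj1 HB))).
    + intros k Hk. apply (proj2 (proj2 (proj1 (proj2 (proj2 HB) k Hk)))).
Qed.

(** * Decomposition of a causally complete refinement *)

(* The [k]-th component of the decomposition of [S] consists of the irreducible tails. *)
Definition tails S k : fam E V :=
  fun x => valued_in (Th' k) x /\ nonempty x /\ Ext S (pjoin k x).

Section Decomposition.
Variable S : fam E V.
Hypothesis HS : space S.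
Hypothesis HSut : unique_tips S.
Hypothesis HSle : space_le S (compose Th Th').

Lemma space_le_S_Th : space_le S Th.
Proof. intros x Hx. apply HSle. revert Hx. apply Ext_incl. intros h Hh; left; exact Hh. Qed.

Lemma maxExt_Ext_S k : maxExt Th k -> Ext S k.
Proof. intros [Hk _]. apply space_le_S_Th, Hk. Qed.

Lemma tails_finite k : maxExt Th k -> finite_fam (tails S k).
Proof.
  intros Hk. destruct (Ext_finite S (proj1 HS)) as [lS HlS].
  apply (finite_fam_of_list _ (map (restrict (fun w => k w = None)) lS)).
  intros x [Hv [_ Hx]].
  replace x with (restrict (fun w => k w = None) (pjoin k x)); [apply in_map, HlS, Hx|].
  apply functional_extensionality; intro w.
  destruct (classic (k w = None)) as [Hn|Hn].
  - rewrite restrict_in, pjoin_r; auto.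
  - rewrite restrict_out; auto. destruct (x w) eqn:Exw; auto.
    exfalso; apply Hn; eapply Th'_valued_outside; eauto.
Qed.

Lemma tails_Ext_closed k : maxExt Th k -> forall x, Ext (tails S k) x -> tails S k x.
Proof.
  intros Hk x Hx. apply Ext_covered in Hx as [[a [[_ [[w0 [v0 Ha0]] _]] Ha]] Hc].
  split; [|split; [exists w0, v0; apply Ha, Ha0|]].
  { intros w v Hw. destruct (Hc _ _ Hw) as [b [[Hbv _] [_ Hbw]]]. apply Hbv, Hbw. }
  destruct (proj1 (Ext_covered _ _) (maxExt_Ext_S k Hk)) as [[b [Sb Hb]] HcK].
  apply Ext_covered. split.
  - exists b; split; auto. eapply pfle_trans; [exact Hb|apply pjoin_l].
  - intros w v Hw. destruct (k w) eqn:Ekw.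
    + unfold pjoin in Hw; rewrite Ekw in Hw. injection Hw as <-.
      destruct (HcK _ _ Ekw) as [s [Ss [Hs Hsw]]]. exists s; split; auto; split; auto.
      eapply pfle_trans; [exact Hs|apply pjoin_l].
    + rewrite pjoin_r in Hw by auto. destruct (Hc _ _ Hw) as [y [[_ [_ Hy]] [Hyx Hyw]]].
      apply Ext_covered in Hy as [_ Hcy].
      destruct (Hcy w v) as [s [Ss [Hs Hsw]]]; [rewrite pjoin_r; auto|].
      exists s; split; auto; split; auto.
      eapply pfle_trans; [exact Hs|apply pjoin_mono_r; auto].
Qed.

Lemma Th'_tails k x : maxExt Th k -> Ext (Th' k) x -> tails S k x.
Proof.
  intros Hk Hx. split; [apply Ext_valued_in; auto|split].
  - apply Ext_covered in Hx as [[s [Ts Hs]] _].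
    destruct (vee_prime_nonempty _ s (proj2 (HTh' k Hk)) Ts) as [w [v Hw]].
    exists w, v; apply Hs, Hw.
  - apply HSle, Ext_compose_pjoin; auto. apply (proj1 Hk).
Qed.

Lemma Ext_irreducible_tails k : maxExt Th k ->
  forall x, Ext (irreducibles (tails S k)) x <-> tails S k x.
Proof.
  intro Hk. apply Ext_irreducibles.
  - apply tails_finite, Hk.
  - intros x [_ [Hx _]]; exact Hx.
  - apply tails_Ext_closed, Hk.
Qed.

Lemma tails_restrict k x s :
  maxExt Th k -> tails S k x -> S s -> pfle s (pjoin k x) ->
  nonempty (restrict (fun w => k w = None) s) ->
  tails S k (restrict (fun w => k w = None) s) /\ pfle (restrict (fun w => k w = None) s) x.
Proof.
  intros Hk [Hxv _] Ss Hs Hne. set (y := restrict (fun w => k w = None) s).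
  assert (Hyx : pfle y x).
  { intros w v Hw. unfold y, restrict in Hw.
    destruct (excluded_middle_informative (k w = None)) as [Hn|Hn]; [|discriminate].
    assert (H := Hs _ _ Hw). rewrite pjoin_r in H; auto. }
  assert (Hsy : pfle s (pjoin k y)).
  { intros w v Hw. unfold pjoin. destruct (k w) eqn:Ekw.
    + assert (H := Hs _ _ Hw). unfold pjoin in H; rewrite Ekw in H; auto.
    + unfold y; rewrite restrict_in; auto. }
  split; auto. split; [intros w v Hw; apply Hxv, Hyx, Hw|split; auto].
  destruct (proj1 (Ext_covered _ _) (maxExt_Ext_S k Hk)) as [_ HcK].
  apply Ext_covered. split; [exists s; auto|].
  intros w v Hw. destruct (k w) eqn:Ekw.
  - unfold pjoin in Hw; rewrite Ekw in Hw; injection Hw as <-.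
    destruct (HcK _ _ Ekw) as [b [Sb [Hb Hbw]]]. exists b; split; auto; split; auto.
    eapply pfle_trans; [exact Hb|apply pjoin_l].
  - rewrite pjoin_r in Hw by auto. unfold y in Hw; rewrite restrict_in in Hw by auto.
    exists s; auto.
Qed.

(* An element of [S] below [pjoin k x] that sees a tip of [x] sees all of [x]: otherwise its
   part outside [k] would be a strictly smaller tail containing that tip. *)
Lemma tails_tip_dom k x e s w :
  maxExt Th k -> tails S k x -> tips (tails S k) x e ->
  S s -> pfle s (pjoin k x) -> dom s e -> dom x w -> dom s w.
Proof.
  intros Hk Hx He Ss Hs Hse Hxw. apply NNPP; intro Hsw.
  rewrite tips_iff in He. destruct He as [Hxe Hn].
  assert (Hkx : forall w, dom x w -> k w = None).
  { intros w' Hw'. unfold dom in Hw'. destruct (x w') eqn:E'; [|congruence].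
    eapply Th'_valued_outside; eauto. apply Hx. }
  unfold dom in Hse. destruct (s e) as [u|] eqn:Ese; [|congruence].
  destruct (tails_restrict k x s Hk Hx Ss Hs) as [Hy Hyx].
  { exists e, u. rewrite restrict_in; auto. }
  apply Hn. exists (restrict (fun w => k w = None) s).
  split; [exact Hy|split; [split; [exact Hyx|]|]].
  - intro Heq. apply Hsw. unfold dom.
    rewrite <- (restrict_in (fun w => k w = None) s w) by auto.
    rewrite Heq; exact Hxw.
  - unfold dom; rewrite restrict_in; auto; congruence.
Qed.

(* Take [s1] minimal in [S] below [pjoin k x] seeing [e1]: then [e1] is its tip in [S], and
   the element of [S] below [s1] seeing [e2] contradicts [tails_tip_dom]. *)
Lemma tails_unique_tip k x e1 e2 :
  maxExt Th k -> tails S k x -> tips (tails S k) x e1 -> tips (tails S k) x e2 -> e1 = e2.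
Proof.
  intros Hk Hx He1 He2. apply NNPP; intro Hne.
  destruct HS as [[lS HlS] _].
  destruct (list_minimal pflt (fun s => S s /\ pfle s (pjoin k x) /\ dom s e1)
              pflt_irrefl pflt_trans lS) as [s1 [_ [[Ss1 [Hs1 Hs1e]] Hmin]]].
  { assert (Hd1 := proj1 He1). unfold dom in Hd1.
    destruct (x e1) as [v1|] eqn:Ex1; [|congruence].
    destruct Hx as [Hxv [_ HxS]]. apply Ext_covered in HxS as [_ Hc].
    destruct (Hc e1 v1) as [s [Ss [Hs Hse]]].
    { rewrite pjoin_r; auto. eapply Th'_valued_outside; eauto. }
    exists s; split; [apply HlS; auto|]. repeat split; auto. unfold dom; congruence. }
  assert (Hbelow : forall t, S t -> pflt t s1 -> ~ dom t e1).
  { intros t St Hlt Hte. apply (Hmin t); auto. apply HlS; auto.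
    split; auto. split; auto. eapply pfle_trans; [apply Hlt|exact Hs1]. }
  assert (Ht1 : tips S s1 e1).
  { rewrite tips_iff. split; auto. intros [t [St [Hlt Hte]]]. apply (Hbelow t); auto. }
  assert (Hnt2 : ~ tips S s1 e2).
  { intro H. destruct (HSut s1 Ss1) as [w0 [_ Hu]].
    apply Hne. rewrite (Hu e1 Ht1), (Hu e2 H). reflexivity. }
  rewrite tips_iff in Hnt2.
  destruct (classic (exists t, S t /\ pflt t s1 /\ dom t e2)) as [[t [St [Hlt Hte2]]]|Hno].
  - apply (Hbelow t St Hlt). apply (tails_tip_dom k x e2 t e1); auto.
    + eapply pfle_trans; [apply Hlt|exact Hs1].
    + apply (proj1 He1).
  - apply Hnt2; split; auto. apply (tails_tip_dom k x e1 s1 e2); auto. apply (proj1 He2).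
Qed.

Lemma irreducible_tails_space_le k :
  maxExt Th k -> space_le (irreducibles (tails S k)) (Th' k).
Proof. intros Hk x Hx. apply (Ext_irreducible_tails k Hk), Th'_tails; auto. Qed.

Lemma irreducible_tails_inputs k : maxExt Th k ->
  forall w v, inputs (irreducibles (tails S k)) w v <-> inputs (Th' k) w v.
Proof.
  intro Hk. apply inputs_space_le; [apply irreducible_tails_space_le, Hk|].
  intros x [[Hx _] _]; exact Hx.
Qed.

Lemma irreducible_tails_CC_cand k :
  maxExt Th k -> CC_cand (Th' k) (irreducibles (tails S k)).
Proof.
  intro Hk. split; [split|split; [split|apply irreducible_tails_space_le, Hk]].
  - apply (finite_fam_incl _ (tails S k)); [intros x [Hx _]; exact Hx|apply tails_finite, Hk].
  - apply vee_prime_irreducibles.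
  - apply (free_choice_space_le (Th' k)); auto.
    + apply irreducible_tails_space_le, Hk.
    + apply irreducible_tails_inputs, Hk.
  - apply unique_tips_irreducibles; [apply Ext_irreducible_tails, Hk|].
    intros x e1 e2 Hx. apply tails_unique_tip; auto.
Qed.

Lemma decompose_refinement :
  refinement (trim S Th) (fun k => irreducibles (tails S k)) /\
  space_le S (compose (trim S Th) (fun k => irreducibles (tails S k))).
Proof.
  split; [split; [|split]|].
  - apply trim_CC_cand; auto. apply space_le_S_Th.
  - apply trim_inputs, space_le_S_Th.
  - intros k Hk. split; [apply irreducible_tails_CC_cand|apply irreducible_tails_inputs]; auto.
  - unfold space_le; apply Ext_incl_Ext. intros s [[Ss _]|[k [x [Hk [[[_ [_ Hx]] _] ->]]]]].
    + apply in_Ext, Ss.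
    + exact Hx.
Qed.

End Decomposition.

Lemma refinement_of_CC A (A' : pfun E V -> fam E V) :
  CC Th A -> (forall k, maxExt Th k -> CC (Th' k) (A' k)) -> refinement A A'.
Proof.
  intros HC HC'. split; [apply HC|split; [apply CC_inputs; auto|]].
  intros k Hk. split; [apply HC'; auto|apply CC_inputs; auto].
Qed.

Lemma CC_compose_maximal A (A' : pfun E V -> fam E V) B (B' : pfun E V -> fam E V) :
  CC (compose Th Th') (compose A A') -> refinement A A' -> refinement B B' ->
  space_le A B -> (forall k, maxExt Th k -> space_le (A' k) (B' k)) ->
  space_le B A /\ forall k, maxExt Th k -> space_le (B' k) (A' k).
Proof.
  intros [_ Hmax] HA HB HAB HAB'.
  apply (compose_space_le_inv B B' A A' HB HA).
  rewrite (Hmax (compose B B')); [apply space_le_refl|exact (compose_CC_cand B B' HB)|].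
  apply compose_space_le; auto. apply (refinement_Ext_maxExt A A' HA).
Qed.

(* Trimming a competitor [B] of [A] yields a composition above [compose A A'], hence equal to
   it by maximality, and [compose_space_le_inv] then gives [space_le (trim B Th) A]. *)
Lemma CC_compose_l A (A' : pfun E V -> fam E V) :
  CC (compose Th Th') (compose A A') -> refinement A A' -> CC Th A.
Proof.
  intros HCC HA. split; [apply HA|]. intros B HB HAB.
  pose proof HB as [HBsp [[_ HBut] HBle]].
  assert (HB0 : refinement (trim B Th) A').
  { split; [apply trim_CC_cand; auto|split; [apply trim_inputs; auto|apply HA]]. }
  apply (CC_cand_trim_eq Th); [apply HA|exact HB|exact HAB|].
  apply (CC_compose_maximal A A' (trim B Th) A'); auto.
  - apply (space_le_trans _ B); auto. apply space_le_incl. intros h [H _]; exact H.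
  - intros k _. apply space_le_refl.
Qed.

Lemma CC_compose_r A (A' : pfun E V -> fam E V) :
  CC (compose Th Th') (compose A A') -> refinement A A' ->
  forall k, maxExt Th k -> CC (Th' k) (A' k).
Proof.
  intros HCC HA k0 Hk0. split; [apply HA, Hk0|]. intros B' HB' HAB'.
  pose proof HB' as [HBsp [[_ HBut] HBle]].
  set (A'' := fun k => if excluded_middle_informative (k = k0) then trim B' (Th' k0) else A' k).
  assert (HA'' : forall k, k = k0 -> A'' k = trim B' (Th' k0)).
  { intros k ->. unfold A''. destruct (excluded_middle_informative (k0 = k0)); congruence. }
  assert (HA''ne : forall k, k <> k0 -> A'' k = A' k).
  { intros k Hne. unfold A''. destruct (excluded_middle_informative (k = k0)); congruence. }
  assert (HR : refinement A A'').
  { split; [apply HA|split; [apply HA|]]. intros k Hk.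
    destruct (classic (k = k0)) as [->|Hne];
      [rewrite HA''; auto|rewrite HA''ne; auto; apply HA, Hk].
    split; [apply trim_CC_cand|apply trim_inputs]; auto. }
  apply (CC_cand_trim_eq (Th' k0)); [apply HA, Hk0|exact HB'|exact HAB'|].
  rewrite <- (HA'' k0) by reflexivity.
  apply (CC_compose_maximal A A' A A''); auto; [apply space_le_refl|]. intros k Hk.
  destruct (classic (k = k0)) as [->|Hne];
    [rewrite HA''; auto|rewrite HA''ne; auto; apply space_le_refl].
  apply (space_le_trans _ B'); auto. apply space_le_incl. intros h [H _]; exact H.
Qed.

Lemma CC_compose A (A' : pfun E V -> fam E V) :
  CC Th A -> (forall k, maxExt Th k -> CC (Th' k) (A' k)) ->
  CC (compose Th Th') (compose A A').
Proof.
  intros HC HC'. assert (HR := refinement_of_CC A A' HC HC').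
  split; [apply compose_CC_cand, HR|]. intros S HS Hle.
  pose proof HS as [HSsp [[_ HSut] HSle]].
  destruct (decompose_refinement S HSsp HSut HSle) as [HD HSD].
  destruct (compose_space_le_inv A A' _ _ HR HD (space_le_trans _ _ _ Hle HSD)) as [HAD HAD'].
  assert (HeqA : trim S Th = A) by (apply HC; [apply HD|exact HAD]).
  assert (HeqA' : forall k, maxExt Th k -> irreducibles (tails S k) = A' k)
    by (intros k Hk; apply HC'; [exact Hk|apply HD, Hk|apply HAD', Hk]).
  apply space_le_antisym;
    [apply HSsp|apply compose_vee_prime, HR|apply (space_le_trans _ _ _ HSD)|exact Hle].
  apply compose_space_le; [apply (refinement_Ext_maxExt _ _ HD)|rewrite HeqA; apply space_le_refl|].
  intros k Hk. rewrite (HeqA' k Hk). apply space_le_refl.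
Qed.

Lemma CC_compose_decompose Sg :
  CC (compose Th Th') Sg -> exists A A', refinement A A' /\ Sg = compose A A'.
Proof.
  intros [[HSsp [[_ HSut] HSle]] Hmax].
  destruct (decompose_refinement Sg HSsp HSut HSle) as [HD HSD].
  eexists; eexists; split; [exact HD|].
  symmetry; apply Hmax; [apply compose_CC_cand, HD|exact HSD].
Qed.

Lemma seqc_eq_compose : seqc Th Th' = compose Th Th'.
Proof.
  apply seqc_compose; [tauto|]. intros k _ x Hx. apply Ext_valued_in, in_Ext, Hx.
Qed.

End Composition.

Theorem theorem2 (E V : Type) (Th : fam E V) (Th' : pfun E V -> fam E V)
  (HTh : space Th) (HfcTh : free_choice Th)
  (HTh' : forall k, maxExt Th k -> space (Th' k))
  (Hfc' : forall k, maxExt Th k -> free_choice (Th' k))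
  (Hdisj : forall k, maxExt Th k -> forall w, events Th w -> events (Th' k) w -> False)
  (Hsame : forall k1 k2, maxExt Th k1 -> maxExt Th k2 ->
     (forall w, events (Th' k1) w <-> events (Th' k2) w) /\
     (forall w v, events (Th' k1) w -> (inputs (Th' k1) w v <-> inputs (Th' k2) w v))) :
  forall Sg : fam E V,
    CC (seqc Th Th') Sg <->
    exists (hTh : fam E V) (hTh' : pfun E V -> fam E V),
      CC Th hTh /\ (forall k, maxExt Th k -> CC (Th' k) (hTh' k)) /\
      Sg = seqc hTh hTh'.
Proof.
  intro Sg. rewrite (seqc_eq_compose E V Th Th' HfcTh Hdisj). split.
  - intro HSg.
    destruct (CC_compose_decompose E V Th Th' HTh HfcTh HTh' Hfc' Hdisj Hsame Sg HSg)
      as [A [A' [HA ->]]].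
    exists A, A'. split; [|split].
    + eapply CC_compose_l; eassumption.
    + eapply CC_compose_r; eassumption.
    + symmetry. eapply seqc_refinement; eassumption.
  - intros [A [A' [HC [HC' ->]]]].
    assert (HR := refinement_of_CC E V Th Th' HfcTh Hfc' A A' HC HC').
    rewrite (seqc_refinement E V Th Th' HfcTh Hdisj A A' HR).
    eapply CC_compose; eassumption.
Qed.
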